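(* Let $\mathcal H$ be an infinite-dimensional complex Hilbert space and let $\mathcal G_f(\mathcal H)$ be the set of those $t\in\mathcal V_f(\mathcal H)$ for which there exists $A\in\mathcal V(\mathcal H)$ with $D(A)=D(t)$ and $t(x,y)=(Ax,y)$ for all $x,y\in D(t)$. Then $(\mathcal G_f(\mathcal H);\oplus_{|\mathcal G_f(\mathcal H)},o)$ is a sub-generalized effect algebra of $(\mathcal V_f(\mathcal H);\oplus,o)$ and is isomorphic to the generalized effect algebra $(\mathcal V(\mathcal H);\oplus_{\mathcal D},O)$.
   Context: Bilinear forms $t$ on $\mathcal H$ are sesquilinear maps $D(t)\times D(t)\to\mathbb C$ on a dense linear subspace $D(t)$ (linear in the first argument); $t$ is positive if $t(x,x)\ge0$ on $D(t)$, bounded if $\sup\{t(x,x)\mid x\in D(t),\|x\|=1\}<\infty$. The sum $t+s$ has domain $D(t)\cap D(s)$. $o$ is the zero form on $\mathcal H$. $\mathcal V_f(\mathcal H)$ is the set of positive bilinear forms with dense domain such that $D(t)=\mathcal H$ whenever $t$ is bounded; $t\oplus s$ is defined iff $t$ or $s$ is bounded or $D(t)=D(s)$, and then $t\oplus s=t+s$. $\mathcal V(\mathcal H)$ is the set of densely defined linear operators $A:D(A)\to\mathcal H$ with $(Ax,x)\ge0$ for all $x\in D(A)$ and with $D(A)=\mathcal H$ whenever $A$ is bounded; for $A,B\in\mathcal V(\mathcal H)$, $A\oplus_{\mathcal D}B$ is defined iff $A$ or $B$ is bounded or $D(A)=D(B)$, and then $A\oplus_{\mathcal D}B=A+B$ (on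 $D(A)\cap D(B)$); $O$ is the zero operator. A generalized effect algebra is a structure $(E;\oplus,0)$ with a partial operation that is commutative and associative (when one side is defined), has $x\oplus0=x$, is cancellative, and satisfies $x\oplus y=0\Rightarrow x=y=0$. A subset $Q\subseteq E$ is a sub-generalized effect algebra if $0\in Q$ and whenever $x\oplus y=z$ in $E$ with two of $x,y,z$ in $Q$, all three are in $Q$. For $Q\subseteq E$, $x\oplus_{|Q}y$ is defined iff $x\oplus y$ is defined in $E$ and lies in $Q$, and then equals $x\oplus y$. *)

From HB Require Import structures.
From mathcomp Require Import all_boot all_order all_algebra.
From mathcomp Require Import boolp classical_sets reals.
From mathcomp Require Import complex.
Set Implicit Arguments. Unset Strict Implicit. Unset Printing Implicit Defensive.
Import Order.TTheory GRing.Theory Num.Theory.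
Local Open Scope ring_scope.
Local Open Scope classical_set_scope.

(* The inner product ip is linear in the first argument.               *)
Section Hilbert.
Variables (R : realType) (H : lmodType R[i]) (ip : H -> H -> R[i]).

Definition inner_product : Prop :=
  [/\ (forall (a : R[i]) (x y z : H), ip (a *: x + y) z = a * ip x z + ip y z),
      (forall x y : H, ip y x = (ip x y)^*),
      (forall x : H, 0 <= ip x x) &
      (forall x : H, ip x x = 0 -> x = 0)].

Definition dist2 (x y : H) : R[i] := ip (x - y) (x - y).

Definition hilbert_complete : Prop :=
  forall u : nat -> H,
    (forall e : R[i], 0 < e -> exists N : nat, forall m n : nat,
        (N <= m)%N -> (N <= n)%N -> dist2 (u m) (u n) < e) ->
    exists l : H, forall e : R[i], 0 < e -> exists N : nat, forall n : nat,
        (N <= n)%N -> dist2 (u n) l < e.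

Definition hilbert_space : Prop := inner_product /\ hilbert_complete.

Definition infinite_dimensional : Prop :=
  forall s : seq H, exists x : H,
    ~ exists c : nat -> R[i], x = \sum_(i < size s) c i *: nth 0 s i.

Definition linear_subspace (D : set H) : Prop :=
  D 0 /\ forall (a : R[i]) (x y : H), D x -> D y -> D (a *: x + y).

Definition dense (D : set H) : Prop :=
  forall (x : H) (e : R[i]), 0 < e -> exists2 d : H, D d & dist2 x d < e.

Definition dense_subspace (D : set H) : Prop := linear_subspace D /\ dense D.

(* Bilinear (sesquilinear) forms with domain: a form is a pair         *)
(* (D(t), t); values outside D(t) x D(t) are normalised to 0 so that   *)
(* equality of forms is Leibniz equality.                              *)
Record form := Form { fdom : set H ; fval : H -> H -> R[i] }.

Definition form_sum (t s : form) : form :=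
  Form (fdom t `&` fdom s)
       (fun x y => if `[< (fdom t `&` fdom s) x /\ (fdom t `&` fdom s) y >]
                   then fval t x y + fval s x y else 0).

Definition zero_form : form := Form setT (fun _ _ => 0).

Definition form_bounded (t : form) : Prop :=
  exists M : R[i], forall x : H, fdom t x -> ip x x = 1 -> fval t x x <= M.

Definition Vf : set form := [set t |
  [/\ dense_subspace (fdom t),
      (forall x y, ~ (fdom t x /\ fdom t y) -> fval t x y = 0) &
    [/\
      (forall (a : R[i]) x y z, fdom t x -> fdom t y -> fdom t z ->
          fval t (a *: x + y) z = a * fval t x z + fval t y z),
      (forall (a : R[i]) x y z, fdom t x -> fdom t y -> fdom t z ->
          fval t z (a *: x + y) = a^* * fval t z x + fval t z y),
      (forall x, fdom t x -> 0 <= fval t x x) &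
      (form_bounded t -> fdom t = setT)]]].

Definition form_oplus (t s : form) : option form :=
  if `[< form_bounded t \/ form_bounded s \/ fdom t = fdom s >]
  then Some (form_sum t s) else None.

(* Linear operators with domain, normalised to 0 outside D(A).         *)
Record oper := Oper { odom : set H ; oval : H -> H }.

Definition oper_sum (A B : oper) : oper :=
  Oper (odom A `&` odom B)
       (fun x => if `[< (odom A `&` odom B) x >] then oval A x + oval B x else 0).

Definition zero_oper : oper := Oper setT (fun _ => 0).

Definition oper_bounded (A : oper) : Prop :=
  exists M : R[i], forall x : H, odom A x -> ip x x = 1 ->
    ip (oval A x) (oval A x) <= M.

Definition Vop : set oper := [set A |
  [/\ dense_subspace (odom A),
      (forall x, ~ odom A x -> oval A x = 0),
      (forall (a : R[i]) x y, odom A x -> odom A y ->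
          oval A (a *: x + y) = a *: oval A x + oval A y),
      (forall x, odom A x -> 0 <= ip (oval A x) x) &
      (oper_bounded A -> odom A = setT)]].

Definition oper_oplusD (A B : oper) : option oper :=
  if `[< oper_bounded A \/ oper_bounded B \/ odom A = odom B >]
  then Some (oper_sum A B) else None.

Definition Gf : set form := [set t | Vf t /\
  exists2 A : oper, Vop A &
    odom A = fdom t /\
    forall x y, fdom t x -> fdom t y -> fval t x y = ip (oval A x) y].

End Hilbert.

(* Generalized effect algebras given by a carrier set S in a type T,   *)
(* a partial operation op : T -> T -> option T and a zero.             *)

Definition restrict_op {T : Type} (Q : set T) (op : T -> T -> option T)
  (x y : T) : option T :=
  match op x y with
  | Some z => if `[< Q z >] then Some z else None
  | None => None
  end.

Definition sub_GEA {T : Type} (S : set T) (op : T -> T -> option T) (z0 : T)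
  (Q : set T) : Prop :=
  [/\ Q `<=` S, Q z0 &
      forall x y z, S x -> S y -> S z -> op x y = Some z ->
        ((Q x /\ Q y) \/ (Q x /\ Q z) \/ (Q y /\ Q z)) ->
        [/\ Q x, Q y & Q z]].

Definition GEA_iso {T1 T2 : Type}
  (S1 : set T1) (op1 : T1 -> T1 -> option T1) (z1 : T1)
  (S2 : set T2) (op2 : T2 -> T2 -> option T2) (z2 : T2) (phi : T1 -> T2) : Prop :=
  [/\ (forall x, S1 x -> S2 (phi x)),
      (forall x y, S1 x -> S1 y -> phi x = phi y -> x = y),
      (forall y, S2 y -> exists2 x, S1 x & phi x = y),
      phi z1 = z2 &
      (forall x y, S1 x -> S1 y -> op2 (phi x) (phi y) = omap phi (op1 x y))].

Definition GEA_isomorphic {T1 T2 : Type}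
  (S1 : set T1) (op1 : T1 -> T1 -> option T1) (z1 : T1)
  (S2 : set T2) (op2 : T2 -> T2 -> option T2) (z2 : T2) : Prop :=
  exists phi : T1 -> T2, GEA_iso S1 op1 z1 S2 op2 z2 phi.

From Pilot Require Import Defs.
From HB Require Import structures.
From mathcomp Require Import all_boot all_order all_algebra.
From mathcomp Require Import boolp classical_sets reals.
From mathcomp Require Import complex.
From mathcomp Require Import ring lra.
Set Implicit Arguments. Unset Strict Implicit. Unset Printing Implicit Defensive.
Import Order.TTheory GRing.Theory Num.Theory.
Local Open Scope ring_scope.
Local Open Scope classical_set_scope.

(* A form of G_f(H) determines its operator uniquely, since its domain is dense
   and a vector orthogonal to a dense set vanishes; so t |-> A is a bijection onto
   V(H).  A form is bounded iff its operator is: t(u,u) <= (|Au|^2 + |u|^2)/2 one way,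
   and Cauchy-Schwarz for t tested against a dense set bounds |Au|^2 the other way.
   Hence the domain conditions defining (+) and (+)_D agree, and sums of forms are
   represented by sums of operators.  For z = x (+) y with x, z in G_f: if y is
   unbounded then D(y) is contained in D(x) and y is represented by C - A restricted
   to D(y); if y is bounded then D(y) = H, and the bounded positive form y, represented
   by C - A on the dense D(x), is represented on all of H by completeness (limits of
   (C - A) s_n along approximating sequences s_n). *)

Local Notation re := (@complex.Re _).
Local Notation im := (@complex.Im _).

Section ComplexScalars.
Variable R : rcfType.
Implicit Types (z w : R[i]) (r : R).

Lemma complex_ext z w : re z = re w -> im z = im w -> z = w.
Proof. by case: z => a b; case: w => c d /= -> ->. Qed.

Lemma ReMc z w : re (z * w) = re z * re w - im z * im w.
Proof. by case: z; case: w. Qed.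

Lemma ReJc z : re z^* = re z. Proof. by case: z. Qed.

Lemma conj_real_complex r : (r%:C%C)^* = r%:C%C :> R[i].
Proof. by rewrite conj_Creal // complex_real. Qed.

Lemma Rec_ge0 z : 0 <= z -> 0 <= re z.
Proof. by rewrite lecE => /andP[]. Qed.

Lemma Rec_gt0 z : 0 < z -> 0 < re z.
Proof. by rewrite ltcE => /andP[]. Qed.

Lemma ler_Rec z w : z <= w -> re z <= re w.
Proof. by rewrite lecE => /andP[]. Qed.

Lemma ltr_Rec z w : z < w -> re z < re w.
Proof. by rewrite ltcE => /andP[]. Qed.

Lemma lec_Rec z w : im z = im w -> (z <= w) = (re z <= re w).
Proof. by move=> e; rewrite lecE e eqxx. Qed.

Lemma ltc_real_complex r z : 0 < z -> (r%:C%C < z) = (r < re z).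
Proof. by rewrite !ltcE /= => /andP[/eqP -> _]; rewrite eqxx. Qed.

Lemma ge0_RecE z : 0 <= z -> (re z)%:C%C = z.
Proof. by move=> /ger0_real /RRe_real. Qed.

Definition sqnormc z := re z ^+ 2 + im z ^+ 2.

Lemma sqnormc_ge0 z : 0 <= sqnormc z. Proof. rewrite /sqnormc; nra. Qed.

Lemma sqnormc_eq0 z : sqnormc z = 0 -> z = 0.
Proof. by rewrite /sqnormc => h; apply: complex_ext => /=; nra. Qed.

Lemma sqnormcN z : sqnormc (- z) = sqnormc z.
Proof. by rewrite /sqnormc !raddfN /= !sqrrN. Qed.

Lemma sqnormcJ z : sqnormc z^* = sqnormc z.
Proof. by case: z => a b; rewrite /sqnormc /= sqrrN. Qed.

Lemma sqr_Rec_le z : re z ^+ 2 <= sqnormc z.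
Proof. rewrite /sqnormc; nra. Qed.

Lemma sqnormcD_le z w : sqnormc (z + w) <= 2 * sqnormc z + 2 * sqnormc w.
Proof.
rewrite /sqnormc !raddfD /=.
have := sqr_ge0 (re z - re w); have := sqr_ge0 (im z - im w); nra.
Qed.

Lemma sqnormc_small_eq0 z : (forall e : R, 0 < e -> sqnormc z <= e) -> z = 0.
Proof.
move=> small; apply: sqnormc_eq0; apply/eqP; rewrite eq_le sqnormc_ge0 andbT.
apply/negPn/negP; rewrite -ltNge => zpos.
by have := small _ (divr_gt0 zpos (ltr0Sn _ 1)); lra.
Qed.

End ComplexScalars.

Lemma exists_inv_succ_lt (R : archiRealFieldType) (e : R) : 0 < e ->
  exists N : nat, forall n : nat, (N <= n)%N -> n.+1%:R^-1 < e.
Proof.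
move=> e_gt0; exists (Num.Def.archi_bound e^-1) => n le_Nn.
have lt_inv : e^-1 < n.+1%:R.
  have e_inv_ge0 : 0 <= e^-1 by rewrite invr_ge0 ltW.
  have := archi_boundP e_inv_ge0.
  by move/lt_le_trans; apply; rewrite ler_nat leqW.
by rewrite -(invrK e) ltf_pV2 ?posrE ?invr_gt0 ?ltr0Sn.
Qed.

Lemma ler_mul_of_quadratic_ge0 (R : realFieldType) (P Q S : R) :
  0 <= P -> 0 <= Q -> 0 <= S ->
  (forall s, 0 <= P - 2 * s * Q + s ^+ 2 * Q * S) -> Q <= P * S.
Proof.
move=> P_ge0 Q_ge0 S_ge0 quad_ge0.
have [S0|S_neq0] := eqVneq S 0.
  rewrite S0 mulr0; have [->//|Q_neq0] := eqVneq Q 0.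
  have := quad_ge0 ((P + 1) / (2 * Q)); rewrite S0 mulr0 addr0.
  have -> : 2 * ((P + 1) / (2 * Q)) * Q = P + 1 by field.
  lra.
have S_gt0 : 0 < S by rewrite lt_def S_neq0.
have := quad_ge0 S^-1.
have -> : P - 2 * S^-1 * Q + S^-1 ^+ 2 * Q * S = P - Q / S by field.
by rewrite subr_ge0 ler_pdivrMr.
Qed.

Section LinearSubspace.
Variables (R : realType) (H : lmodType R[i]) (D : set H).
Hypothesis D_sub : linear_subspace D.

Lemma subspace0 : D 0. Proof. by case: D_sub. Qed.

Lemma subspaceZD a x y : D x -> D y -> D (a *: x + y).
Proof. by case: D_sub => _; apply. Qed.

Lemma subspaceD x y : D x -> D y -> D (x + y).
Proof. by rewrite -[x in x + _]scale1r; apply: subspaceZD. Qed.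

Lemma subspaceZ a x : D x -> D (a *: x).
Proof. by move=> Dx; rewrite -[_ *: _]addr0; apply: subspaceZD Dx subspace0. Qed.

Lemma subspaceB x y : D x -> D y -> D (x - y).
Proof. by move=> Dx Dy; rewrite -scaleN1r addrC; apply: subspaceZD. Qed.

End LinearSubspace.

Section Sesquilinear.
Variables (R : realType) (H : lmodType R[i]).

Definition sesquilinear_on (D : set H) (f : H -> H -> R[i]) : Prop :=
  [/\ linear_subspace D,
      (forall a x y z, D x -> D y -> D z -> f (a *: x + y) z = a * f x z + f y z) &
      (forall a x y z, D x -> D y -> D z -> f z (a *: x + y) = a^* * f z x + f z y)].

Variables (D : set H) (f : H -> H -> R[i]).
Hypothesis f_sesq : sesquilinear_on D f.

Let D_sub : linear_subspace D. Proof. by case: f_sesq. Qed.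
Let D0 : D 0. Proof. exact: subspace0 D_sub. Qed.

Lemma sesqZDl a x y z : D x -> D y -> D z -> f (a *: x + y) z = a * f x z + f y z.
Proof. by case: f_sesq => _ + _; apply. Qed.

Lemma sesqZDr a x y z : D x -> D y -> D z -> f z (a *: x + y) = a^* * f z x + f z y.
Proof. by case: f_sesq => _ _; apply. Qed.

Lemma sesq0l z : D z -> f 0 z = 0.
Proof.
move=> Dz; have := sesqZDl 1 D0 D0 Dz.
by rewrite scale1r addr0 mul1r => e; apply: (addrI (f 0 z)); rewrite addr0 -e.
Qed.

Lemma sesq0r z : D z -> f z 0 = 0.
Proof.
move=> Dz; have := sesqZDr 1 D0 D0 Dz.
by rewrite scale1r addr0 rmorph1 mul1r => e; apply: (addrI (f z 0)); rewrite addr0 -e.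
Qed.

Lemma sesqDl x y z : D x -> D y -> D z -> f (x + y) z = f x z + f y z.
Proof. by move=> *; rewrite -[x in x + _]scale1r sesqZDl // mul1r. Qed.

Lemma sesqDr x y z : D x -> D y -> D z -> f z (x + y) = f z x + f z y.
Proof. by move=> *; rewrite -[x in x + _]scale1r sesqZDr // rmorph1 mul1r. Qed.

Lemma sesqZl a x z : D x -> D z -> f (a *: x) z = a * f x z.
Proof. by move=> Dx Dz; rewrite -[_ *: _]addr0 sesqZDl ?sesq0l ?addr0. Qed.

Lemma sesqZr a x z : D x -> D z -> f z (a *: x) = a^* * f z x.
Proof. by move=> Dx Dz; rewrite -[_ *: _]addr0 sesqZDr ?sesq0r ?addr0. Qed.

Lemma sesqBl x y z : D x -> D y -> D z -> f (x - y) z = f x z - f y z.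
Proof. by move=> Dx Dy Dz; rewrite -scaleN1r addrC sesqZDl // mulN1r addrC. Qed.

Lemma sesqBr x y z : D x -> D y -> D z -> f z (x - y) = f z x - f z y.
Proof. by move=> Dx Dy Dz; rewrite -scaleN1r addrC sesqZDr // rmorphN1 mulN1r addrC. Qed.

Hypothesis f_ge0 : forall x, D x -> 0 <= f x x.

(* Hermitian symmetry comes from positivity along [x + y] and [i x + y]. *)
Lemma sesq_herm x y : D x -> D y -> f y x = (f x y)^*.
Proof.
move=> Dx Dy.
have Dxy := subspaceD D_sub Dx Dy; have Dixy := subspaceZD D_sub 'i%C Dx Dy.
have := ger0_Im (f_ge0 Dxy); have := ger0_Im (f_ge0 Dixy).
have := ger0_Im (f_ge0 Dx); have := ger0_Im (f_ge0 Dy).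
rewrite sesqZDl // !sesqZDr // sesqDl // !sesqDr //.
move: (f x x) (f x y) (f y x) (f y y) => [a1 a2] [b1 b2] [c1 c2] [d1 d2] /=.
by move=> *; apply: complex_ext => /=; lra.
Qed.

Lemma sesq_CauchySchwarz x y : D x -> D y ->
  sqnormc (f x y) <= re (f x x) * re (f y y).
Proof.
move=> Dx Dy; set a := f x y.
have Day : D (a *: y) by apply: subspaceZ.
apply: ler_mul_of_quadratic_ge0; rewrite ?sqnormc_ge0 ?Rec_ge0 ?f_ge0 // => s.
have Dv := subspaceZD D_sub (- s%:C%C) Day Dx.
have := f_ge0 Dv; have := ger0_Im (f_ge0 Dx); have := ger0_Im (f_ge0 Dy).
rewrite sesqZDl // !sesqZDr // !sesqZl // !sesqZr // (sesq_herm Dx Dy) -/a.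
clear Day Dv; move: (f x x) (f y y) a => [a1 a2] [b1 b2] [c1 c2] /=.
rewrite /sqnormc /real_complex_def lecE /= => -> -> /andP[_]; lra.
Qed.

End Sesquilinear.

Section InnerProduct.
Variables (R : realType) (H : lmodType R[i]) (ip : H -> H -> R[i]).
Hypothesis ip_inner : inner_product ip.

Lemma ip_sesq : sesquilinear_on setT ip.
Proof.
case: ip_inner => linl herm _ _; split => // a x y z _ _ _.
by rewrite [LHS]herm linl !(herm _ z) rmorphD rmorphM.
Qed.

Lemma ip_ge0 x : 0 <= ip x x. Proof. by case: ip_inner => _ _ + _; apply. Qed.

Lemma ip_herm x y : ip y x = (ip x y)^*. Proof. by case: ip_inner => _ + _ _; apply. Qed.

Lemma ipDl x y z : ip (x + y) z = ip x z + ip y z. Proof. by apply: (sesqDl ip_sesq). Qed.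
Lemma ipDr x y z : ip z (x + y) = ip z x + ip z y. Proof. by apply: (sesqDr ip_sesq). Qed.
Lemma ipBl x y z : ip (x - y) z = ip x z - ip y z. Proof. by apply: (sesqBl ip_sesq). Qed.
Lemma ipBr x y z : ip z (x - y) = ip z x - ip z y. Proof. by apply: (sesqBr ip_sesq). Qed.
Lemma ipZl a x z : ip (a *: x) z = a * ip x z. Proof. by apply: (sesqZl ip_sesq). Qed.
Lemma ipZr a x z : ip z (a *: x) = a^* * ip z x. Proof. by apply: (sesqZr ip_sesq). Qed.
Lemma ip0l z : ip 0 z = 0. Proof. by apply: (sesq0l ip_sesq). Qed.

Lemma dense_subspaceT : dense_subspace ip setT.
Proof. by split => // x e e_gt0; exists x; rewrite // /dist2 subrr ip0l. Qed.

Definition sqnorm x := re (ip x x).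

Lemma sqnorm_ge0 x : 0 <= sqnorm x. Proof. exact: Rec_ge0 (ip_ge0 x). Qed.

Lemma ip_sqnorm x : ip x x = (sqnorm x)%:C%C.
Proof. by rewrite ge0_RecE ?ip_ge0. Qed.

Lemma sqnorm_eq0 x : sqnorm x = 0 -> x = 0.
Proof. by case: ip_inner => _ _ _ + e; apply; rewrite ip_sqnorm e. Qed.

Lemma ip_CauchySchwarz x y : sqnormc (ip x y) <= sqnorm x * sqnorm y.
Proof. exact: sesq_CauchySchwarz ip_sesq (fun x _ => ip_ge0 x) _ _ I I. Qed.

Lemma sqnormD x y : sqnorm (x + y) = sqnorm x + 2 * re (ip x y) + sqnorm y.
Proof. by rewrite /sqnorm ipDl !ipDr (ip_herm x y) !raddfD /= ReJc; lra. Qed.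

Lemma sqnormB x y : sqnorm (x - y) = sqnorm x - 2 * re (ip x y) + sqnorm y.
Proof. by rewrite /sqnorm ipBl !ipBr (ip_herm x y) !raddfB /= ReJc; lra. Qed.

Lemma sqnormBC x y : sqnorm (x - y) = sqnorm (y - x).
Proof. by rewrite !sqnormB (ip_herm x y) ReJc; lra. Qed.

Lemma sqnormB_le x y : sqnorm (x - y) <= 2 * sqnorm x + 2 * sqnorm y.
Proof.
have := sqnorm_ge0 (x + y); rewrite sqnormB sqnormD.
have := sqnorm_ge0 x; have := sqnorm_ge0 y; lra.
Qed.

Definition cvg_sqnorm (a : nat -> H) (x : H) : Prop :=
  forall e : R, 0 < e -> exists N : nat, forall n, (N <= n)%N -> sqnorm (a n - x) < e.

Lemma complete_sqnorm : hilbert_complete ip -> forall a : nat -> H,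
  (forall e : R, 0 < e -> exists N : nat, forall m n : nat,
     (N <= m)%N -> (N <= n)%N -> sqnorm (a m - a n) < e) ->
  exists l, cvg_sqnorm a l.
Proof.
move=> complete a a_cauchy; have [|l a_l] := complete a.
  move=> e e_gt0; have [N aN] := a_cauchy _ (Rec_gt0 e_gt0).
  by exists N => m n Nm Nn; rewrite /dist2 ip_sqnorm ltc_real_complex // aN.
exists l => e; rewrite -ltcR => e_gt0; have [N aN] := a_l _ e_gt0.
by exists N => n Nn; rewrite -ltcR -ip_sqnorm aN.
Qed.

Section Dense.
Variable D : set H.
Hypothesis D_dense : dense ip D.

Lemma dense_sqnorm x (d : R) : 0 < d -> exists2 v, D v & sqnorm (x - v) < d.
Proof.
rewrite -ltcR => d_gt0; have [v Dv /ltr_Rec lt_d] := D_dense x d_gt0.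
by exists v.
Qed.

Lemma dense_orthogonal_eq0 w : (forall v, D v -> ip w v = 0) -> w = 0.
Proof.
move=> w_perp; apply: sqnorm_eq0; apply/eqP; rewrite eq_le sqnorm_ge0 andbT.
apply/negPn/negP; rewrite -ltNge => w_gt0.
have [v Dv lt_wv] := dense_sqnorm w (divr_gt0 w_gt0 (ltr0Sn _ 1)).
have ip_ww : ip w w = ip w (w - v) by rewrite ipBr (w_perp v Dv) subr0.
have := ip_CauchySchwarz w (w - v).
rewrite -ip_ww ip_sqnorm /sqnormc /= expr0n /= addr0.
by have := sqnorm_ge0 (w - v); nra.
Qed.

Lemma dense_cvg_seq x : exists2 s : nat -> H, (forall n, D (s n)) & cvg_sqnorm s x.
Proof.
have approx n : exists v, D v /\ sqnorm (x - v) < n.+1%:R^-1.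
  have n_gt0 : 0 < n.+1%:R^-1 :> R by rewrite invr_gt0 ltr0Sn.
  by have [v Dv lt_v] := dense_sqnorm x n_gt0; exists v.
have [s Ds] := choice approx.
exists s => [n|e e_gt0]; first by case: (Ds n).
have [N lt_e] := exists_inv_succ_lt e_gt0.
by exists N => n Nn; rewrite sqnormBC; apply: lt_trans (Ds n).2 (lt_e n Nn).
Qed.

Lemma dense_bounded_eq0 (phi : H -> R[i]) (K : R) : 0 <= K ->
  (forall v w, phi (v - w) = phi v - phi w) ->
  (forall w, sqnormc (phi w) <= K * sqnorm w) ->
  (forall v, D v -> phi v = 0) -> forall v, phi v = 0.
Proof.
move=> K_ge0 phiB phiK phiD v; apply: sqnormc_small_eq0 => e e_gt0.
have K1_gt0 : 0 < K + 1 by rewrite ltr_wpDl.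
have [w Dw lt_vw] := dense_sqnorm v (divr_gt0 e_gt0 K1_gt0).
rewrite -[phi v]subr0 -(phiD w Dw) -phiB; apply: le_trans (phiK _) _.
have := ler_wpM2l K_ge0 (ltW lt_vw); move/le_trans; apply.
by rewrite mulrA ler_pdivrMr //; nra.
Qed.

(* [b] is approximated by some [v] in [D] with [re (ip b v) >= sqnorm b / 2] and
   [sqnorm v <= 5/2 sqnorm b], whence [sqnorm b ^+ 2 / 4 <= 5/2 K sqnorm b]. *)
Lemma dense_dual_bound b (K : R) : 0 <= K ->
  (forall v, D v -> sqnormc (ip b v) <= K * sqnorm v) -> sqnorm b <= 12 * K.
Proof.
move=> K_ge0 bK; have b_ge0 := sqnorm_ge0 b.
have [->|b_neq0] := eqVneq (sqnorm b) 0; first lra.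
have b_gt0 : 0 < sqnorm b by rewrite lt_def b_neq0.
have [v Dv lt_bv] := dense_sqnorm b (divr_gt0 b_gt0 (ltr0Sn _ 3)).
move: (bK v Dv); have -> : v = b - (b - v) by rewrite opprB addrC subrK.
move: lt_bv; set d := b - v => lt_d bv; have d_ge0 := sqnorm_ge0 d.
have re_bd : re (ip b d) <= sqnorm b / 2.
  have := ip_CauchySchwarz b d; have := sqr_Rec_le (ip b d); nra.
have lower : sqnorm b ^+ 2 / 4 <= sqnormc (ip b (b - d)).
  apply: le_trans (sqr_Rec_le _); rewrite ipBr raddfB /= -/(sqnorm b); nra.
have upper : K * sqnorm (b - d) <= K * (2 * sqnorm b + 2 * (sqnorm b / 4)).
  by apply: ler_wpM2l => //; have := sqnormB_le b d; lra.
nra.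
Qed.

End Dense.

End InnerProduct.

Section BoundedForms.
Variables (R : realType) (H : lmodType R[i]) (ip : H -> H -> R[i]).
Hypothesis ip_inner : inner_product ip.
Variables (D : set H) (t : H -> H -> R[i]).
Hypotheses (t_sesq : sesquilinear_on D t) (t_ge0 : forall x, D x -> 0 <= t x x).

Let D_sub : linear_subspace D. Proof. by case: t_sesq. Qed.

(* [re M ^+ 2 + 1] is used as a nonnegative majorant of the possibly negative [re M]. *)
Lemma form_le_sqnorm M : (forall u, D u -> ip u u = 1 -> t u u <= M) ->
  forall v, D v -> re (t v v) <= (re M ^+ 2 + 1) * sqnorm ip v.
Proof.
move=> tM v Dv; have v_ge0 := sqnorm_ge0 ip_inner v.
have M_le : re M <= re M ^+ 2 + 1 by nra.
have [v0|v_neq0] := eqVneq (sqnorm ip v) 0.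
  by rewrite v0 mulr0 (sqnorm_eq0 ip_inner v0) (sesq0l t_sesq (subspace0 D_sub)).
have v_gt0 : 0 < sqnorm ip v by rewrite lt_def v_neq0.
set c : R[i] := (Num.sqrt (sqnorm ip v))^-1%:C%C.
have cc : c^* * c = (sqnorm ip v)^-1%:C%C.
  by rewrite conj_real_complex -rmorphM -expr2 exprVn sqr_sqrtr.
have Dcv : D (c *: v) by apply: subspaceZ.
have unit_cv : ip (c *: v) (c *: v) = 1.
  rewrite (ipZl ip_inner) (ipZr ip_inner) mulrA [c * _]mulrC cc (ip_sqnorm ip_inner).
  by rewrite -rmorphM mulVf.
have := ler_Rec (tM _ Dcv unit_cv).
rewrite (sesqZl t_sesq) // (sesqZr t_sesq) // mulrA [c * _]mulrC cc ReMc /= mul0r subr0 => le_M.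
have : re (t v v) <= re M * sqnorm ip v.
  by have := ler_wpM2r v_ge0 le_M; rewrite mulrAC mulVf // mul1r.
by move/le_trans; apply; apply: ler_wpM2r.
Qed.

Variable T : H -> H.
Hypothesis t_rep : forall u v, D u -> D v -> t u v = ip (T u) v.

(* [t u u = re (ip (T u) u)] and [0 <= sqnorm (T u - u)]. *)
Lemma form_bound_of_oper_bound M :
  (forall u, D u -> ip u u = 1 -> ip (T u) (T u) <= M) ->
  forall u, D u -> ip u u = 1 -> t u u <= ((re M + 1) / 2)%:C%C.
Proof.
move=> TM u Du u1; have TuM := ler_Rec (TM u Du u1).
have u_1 : sqnorm ip u = 1 by rewrite /sqnorm u1.
rewrite lec_Rec /= ?(ger0_Im (t_ge0 Du)) //.
have := sqnorm_ge0 ip_inner (T u - u).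
rewrite (sqnormB ip_inner) u_1 -(t_rep Du Du) -/(sqnorm ip (T u)) in TuM *; lra.
Qed.

Hypothesis D_dense : dense ip D.

Lemma oper_bound_of_form_bound M :
  (forall u, D u -> ip u u = 1 -> t u u <= M) ->
  forall u, D u -> ip u u = 1 -> ip (T u) (T u) <= (12 * (re M ^+ 2 + 1) ^+ 2)%:C%C.
Proof.
move=> tM u Du u1; have u_1 : sqnorm ip u = 1 by rewrite /sqnorm u1.
set M0 := re M ^+ 2 + 1; have M0_ge0 : 0 <= M0 by rewrite /M0; nra.
have t_le := form_le_sqnorm tM.
rewrite (ip_sqnorm ip_inner) lecR.
suff : sqnorm ip (T u) <= 12 * (M0 ^+ 2 * sqnorm ip u) by rewrite u_1 mulr1.
apply: (dense_dual_bound ip_inner D_dense).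
  by rewrite mulr_ge0 ?sqr_ge0 ?(sqnorm_ge0 ip_inner).
move=> v Dv; rewrite -(t_rep Du Dv).
apply: le_trans (sesq_CauchySchwarz t_sesq t_ge0 Du Dv) _.
have := ler_pM (Rec_ge0 (t_ge0 Du)) (Rec_ge0 (t_ge0 Dv)) (t_le u Du) (t_le v Dv).
by move/le_trans; apply; rewrite -/M0 u_1; nra.
Qed.

End BoundedForms.

Section BoundedFormRepresentation.
Variables (R : realType) (H : lmodType R[i]) (ip : H -> H -> R[i]).
Hypotheses (ip_inner : inner_product ip) (ip_complete : hilbert_complete ip).
Local Notation sqnorm := (sqnorm ip).
Variables (D : set H) (y : H -> H -> R[i]) (B0 : H -> H) (M0 : R).
Hypotheses (D_sub : linear_subspace D) (D_dense : dense ip D)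
  (y_sesq : sesquilinear_on setT y) (y_ge0 : forall x, 0 <= y x x)
  (M0_ge0 : 0 <= M0) (y_le : forall v, re (y v v) <= M0 * sqnorm v)
  (B0_lin : forall a x z, D x -> D z -> B0 (a *: x + z) = a *: B0 x + B0 z)
  (B0_rep : forall u v, D u -> D v -> y u v = ip (B0 u) v).

Lemma bounded_form_CauchySchwarz u v : sqnormc (y u v) <= M0 * sqnorm u * re (y v v).
Proof.
have := sesq_CauchySchwarz y_sesq (fun x _ => y_ge0 x) (x := u) (y := v) I I.
by move/le_trans; apply; apply: ler_wpM2r; [exact: Rec_ge0 | exact: y_le].
Qed.

Lemma B0B x z : D x -> D z -> B0 (x - z) = B0 x - B0 z.
Proof. by move=> Dx Dz; rewrite -scaleN1r addrC B0_lin // scaleN1r addrC. Qed.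

Lemma B0_sqnorm_le w : D w -> sqnorm (B0 w) <= 12 * (M0 ^+ 2 * sqnorm w).
Proof.
move=> Dw; apply: (dense_dual_bound ip_inner D_dense).
  by rewrite mulr_ge0 ?sqr_ge0 ?(sqnorm_ge0 ip_inner).
move=> v Dv; rewrite -B0_rep //.
have := bounded_form_CauchySchwarz w v; move/le_trans; apply.
have := ler_wpM2l (mulr_ge0 M0_ge0 (sqnorm_ge0 ip_inner w)) (y_le v).
by move/le_trans; apply; rewrite expr2; lra.
Qed.

Lemma B0_cvg u (s : nat -> H) : (forall n, D (s n)) -> cvg_sqnorm ip s u ->
  exists l, cvg_sqnorm ip (B0 \o s) l.
Proof.
move=> Ds s_u; apply: complete_sqnorm => // e e_gt0.
have c_ge0 : 0 <= M0 ^+ 2 := sqr_ge0 M0.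
have K_gt0 : 0 < 48 * M0 ^+ 2 + 1 by rewrite ltr_wpDl ?mulr_ge0.
have d_gt0 := divr_gt0 e_gt0 K_gt0.
have e_d : e = 48 * M0 ^+ 2 * (e / (48 * M0 ^+ 2 + 1)) + e / (48 * M0 ^+ 2 + 1).
  by field; rewrite gt_eqF.
move: d_gt0 e_d; set d := e / _ => d_gt0 e_d.
have [N sN] := s_u _ d_gt0.
exists N => m n Nm Nn /=.
rewrite -B0B //.
have [sm sn] := (sN m Nm, sN n Nn).
have := B0_sqnorm_le (subspaceB D_sub (Ds m) (Ds n)); move/le_lt_trans; apply.
have -> : s m - s n = (s m - u) - (s n - u) by rewrite opprB addrA subrK.
have := sqnormB_le ip_inner (s m - u) (s n - u).
move=> le_mn; have lt_4d : sqnorm (s m - u - (s n - u)) < 4 * d by lra.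
by have := ler_wpM2l c_ge0 (ltW lt_4d); lra.
Qed.

Lemma B0_limit_rep u (s : nat -> H) l : (forall n, D (s n)) -> cvg_sqnorm ip s u ->
  cvg_sqnorm ip (B0 \o s) l -> forall v, D v -> y u v = ip l v.
Proof.
move=> Ds s_u Bs_l v Dv; apply/eqP; rewrite -subr_eq0; apply/eqP.
apply: sqnormc_small_eq0 => e e_gt0.
have yv_ge0 := Rec_ge0 (y_ge0 v); have v_ge0 := sqnorm_ge0 ip_inner v.
set A := M0 * re (y v v) + sqnorm v; have A_ge0 : 0 <= A by rewrite addr_ge0 ?mulr_ge0.
have A_gt0 : 0 < 2 * A + 1 by lra.
have d_gt0 := divr_gt0 e_gt0 A_gt0.
have e_d : e = 2 * (e / (2 * A + 1)) * A + e / (2 * A + 1) by field; rewrite gt_eqF.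
move: d_gt0 e_d; set d := e / _ => d_gt0 e_d.
have [N1 sN1] := s_u _ d_gt0; have [N2 BsN2] := Bs_l _ d_gt0.
pose n := (N1 + N2)%N.
have -> : y u v - ip l v = y (u - s n) v + ip (B0 (s n) - l) v.
  by rewrite (sesqBl y_sesq) // (ipBl ip_inner) -B0_rep //; ring.
apply: le_trans (sqnormcD_le _ _) _.
have small_u : sqnorm (u - s n) <= d by rewrite sqnormBC //; apply/ltW/sN1/leq_addr.
have small_B : sqnorm (B0 (s n) - l) <= d by apply/ltW/BsN2/leq_addl.
have := bounded_form_CauchySchwarz (u - s n) v.
have := ip_CauchySchwarz ip_inner (B0 (s n) - l) v.
have := ler_wpM2r v_ge0 small_B.
have := ler_wpM2r yv_ge0 (ler_wpM2l M0_ge0 small_u).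
rewrite /A in e_d; lra.
Qed.

Lemma bounded_form_rep_at u : exists l, forall v, y u v = ip l v.
Proof.
have [s Ds s_u] := dense_cvg_seq ip_inner D_dense u.
have [l Bs_l] := B0_cvg Ds s_u.
exists l => v; apply/eqP; rewrite -subr_eq0; apply/eqP; move: v.
have yu_ge0 := Rec_ge0 (y_ge0 u); have l_ge0 := sqnorm_ge0 ip_inner l.
apply: (dense_bounded_eq0 D_dense (phi := fun v => y u v - ip l v)
  (K := 2 * (M0 * re (y u u) + sqnorm l))).
- by rewrite mulr_ge0 ?addr_ge0 ?mulr_ge0.
- by move=> v w; rewrite (sesqBr y_sesq) // (ipBr ip_inner); ring.
- move=> w; apply: le_trans (sqnormcD_le _ _) _; rewrite sqnormcN.
  rewrite -sqnormcJ -(sesq_herm y_sesq (fun x _ => y_ge0 x)) //.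
  have := bounded_form_CauchySchwarz w u; have := ip_CauchySchwarz ip_inner l w.
  have := sqnorm_ge0 ip_inner w; nra.
- by move=> v Dv; rewrite (B0_limit_rep Ds s_u Bs_l Dv) subrr.
Qed.

Lemma bounded_form_rep : exists B : H -> H, forall u v, y u v = ip (B u) v.
Proof. by have [B repB] := choice bounded_form_rep_at; exists B. Qed.

End BoundedFormRepresentation.

Section FormsAndOperators.
Variables (R : realType) (H : lmodType R[i]) (ip : H -> H -> R[i]).
Hypothesis ip_inner : inner_product ip.
Local Notation form := (@Defs.form R H).
Local Notation oper := (@Defs.oper R H).
Implicit Types (t s : form) (A B C : oper).

Definition represents t A : Prop :=
  odom A = fdom t /\ forall x y, fdom t x -> fdom t y -> fval t x y = ip (oval A x) y.

Definition summable t s : Prop :=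
  form_bounded ip t \/ form_bounded ip s \/ fdom t = fdom s.

Lemma Vf_sesq t : Vf ip t -> sesquilinear_on (fdom t) (fval t).
Proof. by case=> [[D_sub _] _ [linl linr _ _]]; split. Qed.

Lemma Vf_subspace t : Vf ip t -> linear_subspace (fdom t).
Proof. by case=> [[]]. Qed.

Lemma Vf_ge0 t : Vf ip t -> forall x, fdom t x -> 0 <= fval t x x.
Proof. by case=> _ _ []. Qed.

Lemma Vf_dense t : Vf ip t -> dense ip (fdom t).
Proof. by case=> [[]]. Qed.

Lemma Vf_out t : Vf ip t -> forall x y, ~ (fdom t x /\ fdom t y) -> fval t x y = 0.
Proof. by case. Qed.

Lemma Vf_bounded_domT t : Vf ip t -> form_bounded ip t -> fdom t = setT.
Proof. by case=> _ _ []. Qed.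

Lemma Vop_linear A : Vop ip A -> forall a x y, odom A x -> odom A y ->
  oval A (a *: x + y) = a *: oval A x + oval A y.
Proof. by case. Qed.

Lemma Vop_subspace A : Vop ip A -> linear_subspace (odom A).
Proof. by case=> [[]]. Qed.

Lemma Vop_dense A : Vop ip A -> dense ip (odom A).
Proof. by case=> [[]]. Qed.

Lemma Vop_out A : Vop ip A -> forall x, ~ odom A x -> oval A x = 0.
Proof. by case. Qed.

Lemma Vop_ge0 A : Vop ip A -> forall x, odom A x -> 0 <= ip (oval A x) x.
Proof. by case. Qed.

Lemma Vop_bounded_domT A : Vop ip A -> oper_bounded ip A -> odom A = setT.
Proof. by case. Qed.

Lemma Vop_sesq A : Vop ip A -> sesquilinear_on (odom A) (fun x y => ip (oval A x) y).
Proof.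
move=> VA; split; first exact: Vop_subspace.
- by move=> a x y z Dx Dy _; rewrite Vop_linear // (ipDl ip_inner) (ipZl ip_inner).
- by move=> a x y z _ _ _; rewrite (ipDr ip_inner) (ipZr ip_inner).
Qed.

Lemma Vop_eq A B : Vop ip A -> Vop ip B -> odom A = odom B ->
  (forall u v, odom A u -> odom A v -> ip (oval A u) v = ip (oval B u) v) -> A = B.
Proof.
case: A => D f; case: B => D' g VA VB /= eD fg; subst D'; congr Oper; apply: funext => u.
have [Du|Du] := pselect (D u); last by move: (Vop_out VA Du) (Vop_out VB Du) => /= -> ->.
apply/eqP; rewrite -subr_eq0; apply/eqP.
apply: (dense_orthogonal_eq0 ip_inner (Vop_dense VA)) => v Dv /=.
by rewrite (ipBl ip_inner) fg // subrr.
Qed.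

Lemma Vf_eq t s : Vf ip t -> Vf ip s -> fdom t = fdom s ->
  (forall u v, fdom t u -> fdom t v -> fval t u v = fval s u v) -> t = s.
Proof.
case: t => D f; case: s => D' g Vt Vs /= eD fg; subst D'.
congr Form; apply: funext => u; apply: funext => v.
have [[Du Dv]|Duv] := pselect (D u /\ D v); first exact: fg.
by move: (Vf_out Vt Duv) (Vf_out Vs Duv) => /= -> ->.
Qed.

Lemma form_bounded_of_oper t A : Vf ip t -> represents t A ->
  oper_bounded ip A -> form_bounded ip t.
Proof.
move=> Vt [dom_A tA] [M AM]; exists ((re M + 1) / 2)%:C%C.
apply: (form_bound_of_oper_bound ip_inner (Vf_ge0 Vt) tA) => u Du u1.
by apply: AM; rewrite ?dom_A.
Qed.

Lemma oper_bounded_of_form t A : Vf ip t -> represents t A ->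
  form_bounded ip t -> oper_bounded ip A.
Proof.
move=> Vt [dom_A tA] [M tM]; exists (12 * (re M ^+ 2 + 1) ^+ 2)%:C%C => u.
rewrite dom_A; apply: (oper_bound_of_form_bound ip_inner (Vf_sesq Vt) (Vf_ge0 Vt) tA).
  exact: Vf_dense.
exact: tM.
Qed.

Lemma summableC t s : summable t s -> summable s t.
Proof. by case=> [|[|e]]; [right; left|left|right; right]. Qed.

Lemma summable_dom t s : Vf ip t -> Vf ip s -> summable t s ->
  fdom s `<=` fdom t \/ fdom t `<=` fdom s.
Proof.
move=> Vt Vs [/(Vf_bounded_domT Vt) ->|[/(Vf_bounded_domT Vs) ->|->]]; by [left|right|left].
Qed.

Lemma form_sumC t s : form_sum t s = form_sum s t.
Proof.
by rewrite /form_sum setIC; congr Form; apply: funext => u; apply: funext => v; rewrite addrC.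
Qed.

Lemma oper_sumC A B : oper_sum A B = oper_sum B A.
Proof. by rewrite /oper_sum setIC; congr Oper; apply: funext => u; rewrite addrC. Qed.

Lemma form_sumE t s u v : fdom t u -> fdom s u -> fdom t v -> fdom s v ->
  fval (form_sum t s) u v = fval t u v + fval s u v.
Proof. by move=> *; rewrite /form_sum /= asboolT. Qed.

Lemma oper_sumE A B u : odom A u -> odom B u -> oval (oper_sum A B) u = oval A u + oval B u.
Proof. by move=> *; rewrite /oper_sum /= asboolT. Qed.

Lemma Vf_sum_sub t s : Vf ip t -> Vf ip s -> fdom s `<=` fdom t -> Vf ip (form_sum t s).
Proof.
move=> Vt Vs sub; have eI : fdom t `&` fdom s = fdom s := setIidr sub.
have St := Vf_sesq Vt; have Ss := Vf_sesq Vs.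
have Ut := Vf_subspace Vt; have Us := Vf_subspace Vs.
split; [by rewrite /= eI; case: Vs | by move=> u v uv; rewrite /= asboolF |].
split.
- move=> a u v w [tu su] [tv sv] [tw sw].
  have tuv := subspaceZD Ut a tu tv; have suv := subspaceZD Us a su sv.
  by rewrite !form_sumE // (sesqZDl St) // (sesqZDl Ss) //; ring.
- move=> a u v w [tu su] [tv sv] [tw sw].
  have tuv := subspaceZD Ut a tu tv; have suv := subspaceZD Us a su sv.
  by rewrite !form_sumE // (sesqZDr St) // (sesqZDr Ss) //; ring.
- by move=> u [tu su]; rewrite form_sumE // addr_ge0 // ?(Vf_ge0 Vt) ?(Vf_ge0 Vs).
- move=> [M sumM]; rewrite /= eI; apply: (Vf_bounded_domT Vs); exists M => u su u1.
  apply: le_trans (sumM u (conj (sub u su) su) u1).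
  by have tu := sub u su; rewrite form_sumE // -subr_ge0 addrK (Vf_ge0 Vt).
Qed.

Lemma represents_sum_sub t s A B : Vf ip t -> Vf ip s -> Vop ip A -> Vop ip B ->
  represents t A -> represents s B -> fdom s `<=` fdom t ->
  [/\ Vf ip (form_sum t s), Vop ip (oper_sum A B) & represents (form_sum t s) (oper_sum A B)].
Proof.
move=> Vt Vs VA VB [dA tA] [dB sB] sub; have Vts := Vf_sum_sub Vt Vs sub.
have rep : represents (form_sum t s) (oper_sum A B).
  split => [|u v [tu su] [tv sv]]; first by rewrite /= dA dB.
  by rewrite form_sumE // oper_sumE ?dA ?dB // (ipDl ip_inner) tA // sB.
split => //; split.
- by rewrite /= dA dB setIidr //; case: Vs.
- by move=> u uAB; rewrite /= asboolF.
- move=> a u v [Au Bu] [Av Bv].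
  have := subspaceZD (Vop_subspace VA) a Au Av.
  have := subspaceZD (Vop_subspace VB) a Bu Bv.
  by move=> *; rewrite !oper_sumE // !(Vop_linear VA) // !(Vop_linear VB) // scalerDr addrACA.
- move=> u [Au Bu]; rewrite oper_sumE // (ipDl ip_inner).
  by rewrite addr_ge0 // ?(Vop_ge0 VA) ?(Vop_ge0 VB).
- move=> bnd; have := Vf_bounded_domT Vts (form_bounded_of_oper Vts rep bnd).
  by rewrite /= dA dB.
Qed.

Lemma represents_sum t s A B : Vf ip t -> Vf ip s -> Vop ip A -> Vop ip B ->
  represents t A -> represents s B -> summable t s ->
  [/\ Vf ip (form_sum t s), Vop ip (oper_sum A B) & represents (form_sum t s) (oper_sum A B)].
Proof.
move=> Vt Vs VA VB tA sB /(summable_dom Vt Vs) [sub|sub]; first exact: represents_sum_sub.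
by rewrite form_sumC oper_sumC; apply: represents_sum_sub.
Qed.

Section Summand.
Hypothesis ip_complete : hilbert_complete ip.
Variables (t s : form) (A C : oper).
Hypotheses (Vt : Vf ip t) (Vs : Vf ip s) (VA : Vop ip A) (VC : Vop ip C)
  (tA : represents t A) (tsC : represents (form_sum t s) C).

Lemma summand_val u v : fdom t u -> fdom s u -> fdom t v -> fdom s v ->
  fval s u v = ip (oval C u - oval A u) v.
Proof.
case: tA tsC => dA rA [dC rC] tu su tv sv; have := rC u v (conj tu su) (conj tv sv).
by rewrite form_sumE // (ipBl ip_inner) -rA // => <-; ring.
Qed.

Lemma summand_linear a u v : fdom t u -> fdom s u -> fdom t v -> fdom s v ->
  oval C (a *: u + v) - oval A (a *: u + v) =
  a *: (oval C u - oval A u) + (oval C v - oval A v).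
Proof.
case: tA tsC => dA _ [dC _] tu su tv sv.
rewrite (Vop_linear VC) ?dC //= (Vop_linear VA) ?dA //.
by rewrite scalerBr opprD addrACA.
Qed.

Lemma bounded_summand_rep : form_bounded ip s -> exists2 B, Vop ip B & represents s B.
Proof.
move=> s_bnd; have domT := Vf_bounded_domT Vs s_bnd; have [M sM] := s_bnd.
have Ss : sesquilinear_on setT (fval s) by rewrite -domT; exact: Vf_sesq.
have s_ge0 u : 0 <= fval s u u by apply: (Vf_ge0 Vs); rewrite domT.
have s_le v : re (fval s v v) <= (re M ^+ 2 + 1) * sqnorm ip v.
  by apply: (form_le_sqnorm ip_inner (Vf_sesq Vs) sM); rewrite domT.
have [|||B sB] := bounded_form_rep ip_inner ip_complete (Vf_subspace Vt) (Vf_dense Vt)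
  Ss s_ge0 _ s_le (B0 := fun u => oval C u - oval A u).
- by rewrite addr_ge0 ?sqr_ge0.
- by move=> a u v tu tv; apply: summand_linear; rewrite ?domT.
- by move=> u v tu tv; apply: summand_val; rewrite ?domT.
exists (Oper setT B); last by split => // u v _ _; rewrite domT.
split => //=.
- exact: dense_subspaceT ip_inner.
- (* [B] is obtained by choice; it is linear because [ip (B u) w = fval s u w]. *)
  move=> a u v _ _; apply/eqP; rewrite -subr_eq0; apply/eqP.
  apply: (dense_orthogonal_eq0 ip_inner (dense_subspaceT ip_inner).2) => w _.
  by rewrite (ipBl ip_inner) (ipDl ip_inner) (ipZl ip_inner) -!sB (sesqZDl Ss) // subrr.
- by move=> u _; rewrite -sB.
Qed.

Lemma sub_summand_rep : fdom s `<=` fdom t -> exists2 B, Vop ip B & represents s B.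
Proof.
move=> sub; have Us := Vf_subspace Vs.
pose B := Oper (fdom s) (fun u => if `[< fdom s u >] then oval C u - oval A u else 0).
have sB : represents s B.
  split => // u v su sv /=; rewrite asboolT //.
  by apply: summand_val => //; apply: sub.
exists B => //; split => //=.
- by case: Vs.
- by move=> u su; rewrite asboolF.
- move=> a u v su sv; have := subspaceZD Us a su sv.
  by move=> suv; rewrite !asboolT //; apply: summand_linear => //; apply: sub.
- move=> u su; have tu := sub u su.
  by rewrite asboolT // -summand_val //; apply: (Vf_ge0 Vs).
- by move=> bnd; apply: (Vf_bounded_domT Vs); apply: (form_bounded_of_oper Vs sB).
Qed.

Lemma summand_rep : summable t s -> exists2 B, Vop ip B & represents s B.
Proof.
have [/bounded_summand_rep //|s_unbnd] := pselect (form_bounded ip s).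
case=> [/(Vf_bounded_domT Vt) domT|[//|dom_eq]]; apply: sub_summand_rep.
  by rewrite domT.
by rewrite dom_eq.
Qed.

End Summand.

End FormsAndOperators.

Section OperatorIsomorphism.
Variables (R : realType) (H : lmodType R[i]) (ip : H -> H -> R[i]).
Hypothesis ip_inner : inner_product ip.
Local Notation form := (@Defs.form R H).
Local Notation oper := (@Defs.oper R H).
Local Notation represents := (represents ip).
Implicit Types (t s : form) (A B : oper).

Lemma Gf_intro t A : Vf ip t -> Vop ip A -> represents t A -> Gf ip t.
Proof. by move=> Vt VA tA; split => //; exists A. Qed.

Lemma Vop_zero : Vop ip (zero_oper H).
Proof.
split => //=; first exact: dense_subspaceT.
- by move=> a u v _ _; rewrite scaler0 addr0.
- by move=> u _; rewrite (ip0l ip_inner).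
Qed.

Lemma represents_zero : represents (zero_form H) (zero_oper H).
Proof. by split => //= u v _ _; rewrite (ip0l ip_inner). Qed.

Lemma Gf_zero : Gf ip (zero_form H).
Proof.
apply: Gf_intro Vop_zero represents_zero.
by split => //=; [exact: dense_subspaceT | split => // *; rewrite mulr0 addr0].
Qed.

Definition form_of A : form :=
  Form (odom A) (fun u v => if `[< odom A u /\ odom A v >] then ip (oval A u) v else 0).

Lemma form_ofP A : Vop ip A -> Vf ip (form_of A) /\ represents (form_of A) A.
Proof.
move=> VA; have SA := Vop_sesq ip_inner VA; have UA := Vop_subspace VA.
have rep : represents (form_of A) A by split => //= u v Au Av; rewrite asboolT.
split => //; split => /=; [by case: VA | by move=> u v uv; rewrite asboolF |].
split => /=.
- move=> a u v w Au Av Aw; have := subspaceZD UA a Au Av.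
  by move=> Auv; rewrite !asboolT // (sesqZDl SA).
- move=> a u v w Au Av Aw; have := subspaceZD UA a Au Av.
  by move=> Auv; rewrite !asboolT // (sesqZDr SA).
- by move=> u Au; rewrite asboolT //; apply: Vop_ge0.
- move=> [M AM]; apply: (Vop_bounded_domT VA).
  exists (12 * (re M ^+ 2 + 1) ^+ 2)%:C%C => u Au u1.
  apply: (oper_bound_of_form_bound ip_inner SA (Vop_ge0 VA) _ (Vop_dense VA)) => //.
  by move=> w Aw w1; have := AM w Aw w1; rewrite /= asboolT.
Qed.

(* The operator associated with [t]; junk value [zero_oper H] outside [Gf]. *)
Definition oper_of t : oper :=
  if pselect (exists A, Vop ip A /\ represents t A) is left e then proj1_sig (cid e)
  else zero_oper H.

Lemma oper_ofP t : Gf ip t -> Vop ip (oper_of t) /\ represents t (oper_of t).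
Proof.
case=> _ [A VA tA]; rewrite /oper_of; case: pselect => [e|[]]; last by exists A.
exact: proj2_sig (cid e).
Qed.

Lemma oper_of_eq t A : Gf ip t -> Vop ip A -> represents t A -> oper_of t = A.
Proof.
move=> Gt VA [dA tA]; have [Vt [dt rt]] := oper_ofP Gt.
apply: (Vop_eq ip_inner) => //; first by rewrite dt dA.
by move=> u v; rewrite dt => tu tv; rewrite -rt // -tA.
Qed.

Lemma oper_of_bounded t : Gf ip t -> oper_bounded ip (oper_of t) <-> form_bounded ip t.
Proof.
move=> Gt; have [_ rep] := oper_ofP Gt.
by split; [exact: form_bounded_of_oper Gt.1 rep | exact: oper_bounded_of_form Gt.1 rep].
Qed.

Lemma oper_of_summable t s : Gf ip t -> Gf ip s ->
  (oper_bounded ip (oper_of t) \/ oper_bounded ip (oper_of s) \/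
     odom (oper_of t) = odom (oper_of s)) = summable ip t s.
Proof.
move=> Gt Gs; have [_ [dt _]] := oper_ofP Gt; have [_ [ds _]] := oper_ofP Gs.
have := oper_of_bounded Gt; have := oper_of_bounded Gs.
by rewrite dt ds /summable => bs bt; apply: propext; tauto.
Qed.

Hypothesis ip_complete : hilbert_complete ip.

Lemma Gf_sub_GEA : sub_GEA (Vf ip) (@form_oplus R H ip) (zero_form H) (Gf ip).
Proof.
split; [by move=> t [] | exact: Gf_zero |].
move=> t s r Vt Vs _; rewrite /form_oplus; case: asboolP => // ts [<-].
case=> [[Gt Gs]|[[Gt Gz]|[Gs Gz]]]; split => //.
- case: Gt Gs => _ [A VA tA] [_ [B VB sB]].
  have [Vts VAB tsAB] := represents_sum ip_inner Vt Vs VA VB tA sB ts.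
  exact: Gf_intro VAB tsAB.
- case: Gt Gz => _ [A VA tA] [_ [C VC rC]].
  have [B VB sB] := summand_rep ip_inner ip_complete Vt Vs VA VC tA rC ts.
  exact: Gf_intro VB sB.
- case: Gs Gz => _ [B VB sB] [_ [C VC rC]]; rewrite form_sumC in rC.
  have [A VA tA] := summand_rep ip_inner ip_complete Vs Vt VB VC sB rC (summableC ts).
  exact: Gf_intro VA tA.
Qed.

Lemma oper_of_GEA_iso :
  GEA_iso (Gf ip) (restrict_op (Gf ip) (@form_oplus R H ip)) (zero_form H)
          (Vop ip) (@oper_oplusD R H ip) (zero_oper H) oper_of.
Proof.
split.
- by move=> t /oper_ofP [].
- move=> t s Gt Gs e; have [_ [dt rt]] := oper_ofP Gt; have [_ [ds rs]] := oper_ofP Gs.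
  apply: (Vf_eq Gt.1 Gs.1); first by rewrite -dt -ds e.
  by move=> u v tu tv; rewrite rt // rs -?ds -?e ?dt.
- move=> A VA; have [VfA rep] := form_ofP VA.
  by exists (form_of A); [exact: Gf_intro VA rep | exact: oper_of_eq (Gf_intro VfA VA rep) VA rep].
- exact: oper_of_eq Gf_zero Vop_zero represents_zero.
- move=> t s Gt Gs; rewrite /oper_oplusD /restrict_op /form_oplus oper_of_summable //.
  case: asboolP => [ts|//] /=.
  have [VtA tA] := oper_ofP Gt; have [VsB sB] := oper_ofP Gs.
  have [Vts VAB tsAB] := represents_sum ip_inner Gt.1 Gs.1 VtA VsB tA sB ts.
  have Gts := Gf_intro Vts VAB tsAB.
  by rewrite asboolT //=; congr Some; symmetry; apply: oper_of_eq.
Qed.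

End OperatorIsomorphism.

Theorem theorem4p14 (R : realType) (H : lmodType R[i]) (ip : H -> H -> R[i])
  (hH : hilbert_space ip) (hinf : infinite_dimensional H) :
  sub_GEA (Vf ip) (@form_oplus R H ip) (zero_form H) (Gf ip) /\
  GEA_isomorphic (Gf ip) (restrict_op (Gf ip) (@form_oplus R H ip)) (zero_form H)
                 (Vop ip) (@oper_oplusD R H ip) (zero_oper H).
Proof.
case: hH => ip_inner ip_complete; split; first exact: Gf_sub_GEA.
by exists (oper_of ip); apply: oper_of_GEA_iso.
Qed.
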